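(* Let $x_1\in\mathbb{R}$, $x_2\in\mathbb{R}\cup\{+\infty\}$ with $x_1<x_2$, let $D=[x_1,x_2)$, and let $f:D\to\mathbb{R}$ be ordinal decreasing with $f(x)>0$ for all $x\in D$. Define points $p_\alpha$ for ordinals $\alpha$ by $p_0=x_1$, $p_{\alpha+1}=\max\{y\le x_2:\ x-f(x)<p_\alpha\text{ for all }x\in D\text{ with }x<y\}$, and $p_\alpha=\sup_{\beta<\alpha}p_\beta$ for limit $\alpha$, and define intervals $I_\alpha=[p_\alpha,p_{\alpha+1})$. These intervals partition $D$, and the ordinal number of (nonempty) intervals $I_\alpha$ in this partition is at most $\omega\cdot(o(f|_D)+1)$.
   Context: For $h:E\to\mathbb{R}$, a strictly decreasing sequence $x_1>x_2>\cdots$ in $E$ is $h$-bad if $h(x_1)>h(x_2)>\cdots$; $h$ is ordinal decreasing if there is no infinite $h$-bad sequence. For ordinal decreasing $h$, the tree $T_h$ has a vertex for each finite $h$-bad sequence (the empty sequence being the root), the parent of $\langle x_1>\cdots>x_n\rangle$ being $\langle x_1>\cdots>x_{n-1}\rangle$; each vertex gets the ordinal height $o(v)=\sup_{w\text{ child of }v}(o(w)+1)$, and $o(h)$ is the height of the root. $o(f|_D)$ is the ordinal type of the restriction of $f$ to $D$. Maxima/suprema are taken in $\mathbb{R}\cup\{+\infty\}$. *)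

From HB Require Import structures.
From mathcomp Require Import all_boot all_order all_algebra.
From mathcomp Require Import boolp classical_sets reals constructive_ereal ereal.
From Stdlib Require Import ClassicalEpsilon.

Set Implicit Arguments.
Unset Strict Implicit.
Unset Printing Implicit Defensive.

Import Order.TTheory GRing.Theory Num.Theory.
Local Open Scope classical_set_scope.
Local Open Scope ring_scope.

(* Ordinals, encoded as (Aczel/Brouwer-style) well-founded trees with
   arbitrary index types:  [olim A f]  denotes the least ordinal that is
   strictly greater than every [f a], i.e.  sup_{a : A} (f a + 1).
   Ordinals are compared with the (extensional) relations [ole]/[olt]. *)

Inductive Ord : Type := olim : forall (A : Type), (A -> Ord) -> Ord.

Fixpoint ole (x y : Ord) {struct x} : Prop :=
  match x with
  | olim A f => forall a : A,
      match y with olim B g => exists b : B, ole (f a) (g b) end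
  end.

Definition olt (x y : Ord) : Prop :=
  match y with olim B g => exists b : B, ole x (g b) end.

Definition ozero : Ord := olim (False_rect Ord).
Definition osucc (x : Ord) : Ord := olim (fun _ : unit => x).
Definition ofin (n : nat) : Ord := iter n osucc ozero.
Definition oomega : Ord := olim ofin.

Definition oidx (x : Ord) : Type := match x with olim A _ => A end.
Definition ochild (x : Ord) : oidx x -> Ord :=
  match x return oidx x -> Ord with olim A f => f end.

(* (non-strict) supremum of a family of ordinals *)
Definition osup (B : Type) (h : B -> Ord) : Ord :=
  olim (fun p : {b : B & oidx (h b)} => ochild (projT2 p)).

(* ordinal addition: a + sup_b (g b + 1) = sup (a, sup_b (a + g b + 1)) *)
Fixpoint oadd (a b : Ord) {struct b} : Ord :=
  match b with
  | olim B g =>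
      match a with
      | olim A f => olim (fun s : A + B =>
                      match s with inl x => f x | inr y => oadd a (g y) end)
      end
  end.

(* ordinal multiplication: a * sup_b (g b + 1) = sup_b (a * g b + a) *)
Fixpoint omul (a b : Ord) {struct b} : Ord :=
  match b with
  | olim B g => osup (fun y : B => oadd (omul a (g y)) a)
  end.

Section OrdDecr.
Variable R : realType.

Definition bad_seq (E : set R) (h : R -> R) (u : nat -> R) : Prop :=
  forall n, E (u n) /\ u n.+1 < u n /\ h (u n.+1) < h (u n).

Definition ordinal_decreasing (E : set R) (h : R -> R) : Prop :=
  ~ exists u : nat -> R, bad_seq E h u.

(* finite h-bad sequences <x_1 > ... > x_n> in E (the vertices of T_h) *)
Definition bad_list (E : set R) (h : R -> R) (s : seq R) : Prop :=
  (forall x, x \in s -> E x) /\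
  sorted (fun x y => (y < x) && (h y < h x)) s.

Definition tchild (E : set R) (h : R -> R) (s t : seq R) : Prop :=
  bad_list E h t /\ exists x, t = rcons s x.

Inductive IsHeight (E : set R) (h : R -> R) : seq R -> Ord -> Prop :=
| IsHeight_intro (s : seq R) (g : {t : seq R | tchild E h s t} -> Ord) :
    (forall t, IsHeight E h (sval t) (g t)) ->
    IsHeight E h s (olim g).

Definition o_tree (E : set R) (h : R -> R) : Ord :=
  epsilon (inhabits ozero) (IsHeight E h [::]).

Local Open Scope ereal_scope.

Definition domD (x1 : R) (x2 : \bar R) : set R :=
  [set x : R | (x1 <= x)%R /\ x%:E < x2].

(* p_{alpha+1} from p = p_alpha: the max (= sup; the set is downward closed)
   of { y <= x2 : x - f x < p for all x in D with x < y } *)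
Definition pnext (x1 : R) (x2 : \bar R) (f : R -> R) (p : \bar R) : \bar R :=
  ereal_sup [set y : \bar R | y <= x2 /\
     forall x : R, domD x1 x2 x -> x%:E < y -> (x - f x)%:E < p].

(* This gives p_0 = x1,
   p_{beta+1} = pnext p_beta, and p_alpha = sup_{beta<alpha} p_beta at limits. *)
Fixpoint pt (x1 : R) (x2 : \bar R) (f : R -> R) (a : Ord) : \bar R :=
  match a with
  | olim A g => maxe x1%:E
      (ereal_sup [set pnext x1 x2 f (pt x1 x2 f (g i)) | i in [set: A]])
  end.

Definition Ival (x1 : R) (x2 : \bar R) (f : R -> R) (a : Ord) : set R :=
  [set x : R | pt x1 x2 f a <= x%:E /\ x%:E < pt x1 x2 f (osucc a)].

End OrdDecr.

(* Order type of a family S of pairwise disjoint sets of reals, ordered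
   by position on the line, is at most the ordinal d: S order-embeds
   into the ordinals below d. *)
Definition set_before (R : realType) (I J : set R) : Prop :=
  forall x y, I x -> J y -> (x < y)%R.

Definition otype_le (R : realType) (S : set (set R)) (d : Ord) : Prop :=
  exists g : set R -> Ord,
    (forall I, S I -> olt (g I) d) /\
    (forall I J, S I -> S J -> set_before I J -> olt (g I) (g J)).

(* As long as p_a < x2 we have p_a < p_(a+1): otherwise every point just above p_a
   is preceded by some z in D with z - f z >= p_a, and following such points downward
   yields an infinite f-bad sequence.  So the p_a increase strictly until they pass
   every point of D, and the intervals I_a partition D.
   For the bound, let rho x be the height of the vertex <x> of T_f; then
   p_(omega * b) <= x forces b <= rho x.  Indeed, for c < b and l = omega * c, some
   y in [p_l, x) has f y < f x (whence c <= rho y < rho x by induction): otherwise each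
   of the omega steps after l advances by min (f x, x - p), and p_(l + omega) would
   exceed x.  Since rho x < o(f), every nonempty I_a has a < omega * (o(f) + 1). *)

From HB Require Import structures.
From mathcomp Require Import all_boot all_order all_algebra.
From mathcomp Require Import boolp classical_sets reals constructive_ereal ereal.
From Stdlib Require Import ClassicalEpsilon.

Set Implicit Arguments.
Unset Strict Implicit.
Unset Printing Implicit Defensive.

Import Order.TTheory GRing.Theory Num.Theory.
Local Open Scope classical_set_scope.
Local Open Scope ring_scope.

Lemma ole_olim (A : Type) (f : A -> Ord) y :
  ole (olim f) y <-> forall a, olt (f a) y.
Proof. by case: y. Qed.

Lemma ole_refl x : ole x x.
Proof. by elim: x => A f IH; apply/ole_olim => a; exists a. Qed.

Lemma ole_trans y x z : ole x y -> ole y z -> ole x z.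
Proof.
elim: x y z => A f IH [B g] [C h] /ole_olim xy /ole_olim yz; apply/ole_olim => a.
have [b fg] := xy a; have [c gh] := yz b; exists c; exact: IH fg gh.
Qed.

Lemma olt_olim (A : Type) (f : A -> Ord) a : olt (f a) (olim f).
Proof. by exists a; apply: ole_refl. Qed.

Lemma oltW x y : olt x y -> ole x y.
Proof.
elim: x y => A f IH [B g] [b xg]; apply/ole_olim => a; exists b.
by case: (g b) xg => C h /ole_olim /(_ a); apply: IH.
Qed.

Lemma ole_olt_trans y x z : ole x y -> olt y z -> olt x z.
Proof. by case: z => C h xy [c yh]; exists c; apply: ole_trans yh. Qed.

Lemma olt_irr x : ~ olt x x.
Proof. by elim: x => A f IH [a /ole_olim /(_ a)]; apply: IH. Qed.

Lemma ole_or_gt x y : ole x y \/ olt y x.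
Proof.
elim: x y => A f IH y; have [|yNf] := EM (olt y (olim f)); first by right.
left; apply/ole_olim => a; case: y yNf => B g yNf.
have [b gNf] : exists b, ~ olt (g b) (f a).
  apply: contrapT => gf; apply: yNf; exists a; apply/ole_olim => b.
  by apply: contrapT => gNf; apply: gf; exists b.
by have [fg|//] := IH a (g b); exists b.
Qed.

Lemma osucc_le x y : olt x y -> ole (osucc x) y.
Proof. by move=> xy; apply/ole_olim. Qed.

Lemma osucc_mono x y : ole x y -> ole (osucc x) (osucc y).
Proof. by move=> xy; apply/ole_olim => -[]; exists tt. Qed.

Lemma ole_ochild x y : (forall i : oidx x, olt (ochild i) y) -> ole x y.
Proof. by case: x => A f /ole_olim. Qed.

Lemma ole_osup (B : Type) (h : B -> Ord) b : ole (h b) (osup h).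
Proof. by apply: ole_ochild => i; exists (existT _ b i); apply: ole_refl. Qed.

Lemma ole_oadd a b : ole a (oadd a b).
Proof. by case: a b => A f [B g]; apply/ole_olim => a; exists (inl a); apply: ole_refl. Qed.

Section Heights.
Variables (R : realType) (E : set R) (h : R -> R).

Local Notation bad_step := (fun x y : R => (y < x) && (h y < h x)).

Lemma sorted_rcons_cons (s : seq R) y : s != [::] ->
  sorted bad_step (rcons s y) = sorted bad_step s && bad_step (last 0 s) y.
Proof. by case: s => [//|z s] _; rewrite /= rcons_path. Qed.

Lemma IsHeight_child s a t :
  IsHeight E h s a -> tchild E h s t -> exists2 c, IsHeight E h t c & olt c a.
Proof.
case=> {}s g Hg st; exists (g (exist _ t st)); first exact: (Hg (exist _ t st)).
exact: olt_olim.
Qed.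

(* The subtree below a nonempty vertex depends only on its last element. *)
Lemma IsHeight_last_ole s a s' b : IsHeight E h s a -> IsHeight E h s' b ->
  bad_list E h s' -> s != [::] -> s' != [::] -> last 0 s = last 0 s' -> ole a b.
Proof.
move=> Ha; elim: Ha s' b => {}s g _ IH s' b Hb; case: Hb => {}s' g' Hg'.
move=> [Es' bs'] s0 s'0 ss'.
apply/ole_olim => -[t st]; have [[Et bt] [y ty]] := st.
have st' : tchild E h s' (rcons s' y).
  split; last by exists y.
  split.
    move=> z; rewrite mem_rcons inE => /orP[/eqP ->|]; last exact: Es'.
    by apply: Et; rewrite ty mem_rcons mem_head.
  by move: bt; rewrite ty !sorted_rcons_cons // ss' bs' => /andP[].
exists (exist (tchild E h s') _ st').
apply: (IH (exist _ _ st) (rcons s' y) _ (Hg' (exist (tchild E h s') _ st')) st'.1).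
- by rewrite /= ty; case: (s).
- by case: (s').
- by rewrite /= ty !last_rcons.
Qed.

(* A vertex without a height has a child without a height; iterating this from the
   root walks down an infinite branch of T_h, i.e. an infinite h-bad sequence. *)
Lemma IsHeight_root_exists : ordinal_decreasing E h -> exists c, IsHeight E h [::] c.
Proof.
move=> Hod; apply: contrapT => noH.
have step s : exists t, ~ (exists c, IsHeight E h s c) ->
    tchild E h s t /\ ~ (exists c, IsHeight E h t c).
  have [[t Ht]|Hn] := EM (exists t, tchild E h s t /\ ~ exists c, IsHeight E h t c).
    by exists t.
  exists s => sNH; exfalso; apply: sNH.
  have [g Hg] : exists g : {t | tchild E h s t} -> Ord,
      forall t, IsHeight E h (sval t) (g t).
    apply: (@choice _ _ (fun t c => IsHeight E h (sval t) c)) => -[t st].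
    by apply: contrapT => tNH; apply: Hn; exists t.
  by exists (olim g); constructor.
have [F HF] := @choice _ _ _ step.
pose S n := iter n F [::].
have HS n : tchild E h (S n) (S n.+1) /\ ~ exists c, IsHeight E h (S n.+1) c.
  by elim: n => [|n [_]]; apply: HF.
apply: Hod; exists (fun n => last 0 (S n.+1)) => n.
have [[[ES _] [x Sx]] _] := HS n; have [[[_ bS] [y Sy]] _] := HS n.+1.
move: bS; rewrite Sy sorted_rcons_cons; last by rewrite Sx; case: (S n).
rewrite Sx last_rcons => /andP[_ /andP[yx hyx]]; rewrite last_rcons; split => //.
by apply: ES; rewrite Sx mem_rcons mem_head.
Qed.

Hypothesis Hod : ordinal_decreasing E h.

Definition height_at (x : R) : Ord := epsilon (inhabits ozero) (IsHeight E h [:: x]).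

Lemma IsHeight_o_tree : IsHeight E h [::] (o_tree E h).
Proof. exact: epsilon_spec (IsHeight_root_exists Hod). Qed.

Lemma tchild_nil x : E x -> tchild E h [::] [:: x].
Proof. by move=> Ex; split; [split=> // z; rewrite inE => /eqP -> | exists x]. Qed.

Lemma IsHeight_height_at x : E x -> IsHeight E h [:: x] (height_at x).
Proof.
move=> Ex; have [c Hc _] := IsHeight_child IsHeight_o_tree (tchild_nil Ex).
by apply: epsilon_spec; exists c.
Qed.

Lemma height_at_lt s a y :
  IsHeight E h s a -> tchild E h s (rcons s y) -> olt (height_at y) a.
Proof.
move=> Ha st; have [c Hc ca] := IsHeight_child Ha st.
have Ey : E y by apply: st.1.1; rewrite mem_rcons mem_head.
apply: ole_olt_trans ca; apply: IsHeight_last_ole (IsHeight_height_at Ey) Hc st.1 _ _ _.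
- by [].
- by case: (s).
- by rewrite last_rcons.
Qed.

Lemma height_at_lt_o_tree x : E x -> olt (height_at x) (o_tree E h).
Proof. by move=> Ex; apply: (height_at_lt (s := [::])) IsHeight_o_tree (tchild_nil Ex). Qed.

Lemma height_at_lt_bad x y :
  E x -> E y -> y < x -> h y < h x -> olt (height_at y) (height_at x).
Proof.
move=> Ex Ey yx hyx; apply: (height_at_lt (s := [:: x])) (IsHeight_height_at Ex) _.
split; last by exists y.
by split; [move=> z; rewrite !inE => /orP[] /eqP -> | rewrite /= yx hyx].
Qed.

End Heights.

Lemma ordinal_decreasing_no_descent (R : realType) (E : set R) (h : R -> R) (P : set R) :
  ordinal_decreasing E h -> P `<=` E -> P !=set0 ->
  ~ (forall z, P z -> exists w, [/\ P w, w < z & h w < h z]).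
Proof.
move=> Hod PE [z0 Pz0] desc.
have step z : exists w, P z -> [/\ P w, w < z & h w < h z].
  by have [/desc[w Hw]|Pz] := EM (P z); [exists w | exists z].
have [F HF] := @choice _ _ _ step.
pose u n := iter n F z0.
have Pu n : P (u n) by elim: n => //= n /HF[].
by apply: Hod; exists u => n; have [_ ? ?] := HF _ (Pu n); split=> //; apply: PE.
Qed.

Lemma no_bounded_linear_growth (R : realType) (r : nat -> R) (c x : R) : 0 < c ->
  (forall n, r n < x) -> ~ (forall n, Num.min (r n + c) x <= r n.+1).
Proof.
move=> c0 rx growth.
have lin n : r 0%N + n%:R * c <= r n.
  elim: n => [|n IH]; first by rewrite mul0r addr0.
  have := growth n; rewrite ge_min => /orP[step|]; last by rewrite leNgt rx.
  by apply: le_trans step; rewrite -[n.+1]addn1 natrD mulrDl mul1r addrA lerD2r.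
have x0c : 0 <= (x - r 0%N) / c by rewrite divr_ge0 ?subr_ge0 ?ltW.
have := archi_boundP x0c; rewrite ltr_pdivrMr // ltrBlDl => xlt.
by have := lt_le_trans xlt (lin _); rewrite ltNge ltW.
Qed.

Lemma lt_EFin_exists_real (R : realType) (p : R) (z : \bar R) :
  (p%:E < z)%E -> exists2 y : R, p < y & (y%:E <= z)%E.
Proof.
case: z => [r||//] pz; first by exists r; rewrite -?lte_fin.
by exists (p + 1); rewrite ?leey // ltrDl.
Qed.

Section Points.
Variables (R : realType) (x1 : R) (x2 : \bar R) (f : R -> R).
Hypothesis x12 : (x1%:E < x2)%E.
Hypothesis Hod : ordinal_decreasing (domD x1 x2) f.
Hypothesis f_gt0 : forall x, domD x1 x2 x -> 0 < f x.

Local Notation D := (domD x1 x2).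
Local Notation pt := (pt x1 x2 f).
Local Notation pnext := (pnext x1 x2 f).
Local Open Scope ereal_scope.

Lemma pnext_mono p q : p <= q -> pnext p <= pnext q.
Proof.
move=> pq; apply: ereal_sup_le => y [yx2 Hy]; split=> // z Dz zy.
exact: lt_le_trans (Hy z Dz zy) pq.
Qed.

Lemma pnext_le_x2 p : pnext p <= x2.
Proof. by apply: ge_ereal_sup => y []. Qed.

Lemma pnext_ge p : p <= x2 -> p <= pnext p.
Proof.
move=> px2; apply: ereal_sup_ubound; split=> // z Dz zp; apply: lt_trans zp.
by rewrite lte_fin ltrBlDr ltrDl f_gt0.
Qed.

Lemma pt_ge_x1 a : x1%:E <= pt a.
Proof. by case: a => A g; rewrite /= le_max lexx. Qed.

Lemma pt_le_x2 a : pt a <= x2.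
Proof.
case: a => A g; rewrite /= ge_max (ltW x12).
by apply: ge_ereal_sup => _ [i _ <-]; apply: pnext_le_x2.
Qed.

Lemma pnext_pt_le_olim (A : Type) (g : A -> Ord) i : pnext (pt (g i)) <= pt (olim g).
Proof. by rewrite /= le_max; apply/orP; right; apply: ereal_sup_ubound; exists i. Qed.

Lemma pnext_pt_le_osucc a : pnext (pt a) <= pt (osucc a).
Proof. exact: (pnext_pt_le_olim (fun _ : unit => a) tt). Qed.

Lemma pt_mono a b : ole a b -> pt a <= pt b.
Proof.
elim: a b => A g IH [B h] /ole_olim gh; rewrite [pt (olim g)]/= ge_max pt_ge_x1.
apply: ge_ereal_sup => _ [i _ <-]; have [j gihj] := gh i.
exact: le_trans (pnext_mono (IH i _ gihj)) (pnext_pt_le_olim _ j).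
Qed.

Lemma pt_fin_num a : pt a < +oo -> pt a \is a fin_num.
Proof. by rewrite fin_numElt (lt_le_trans (ltNyr x1) (pt_ge_x1 a)). Qed.

Lemma pnext_lt_witness p (y : R) : pnext p < y%:E -> y%:E <= x2 ->
  exists z, [/\ D z, (z < y)%R & p <= (z - f z)%:E].
Proof.
move=> py yx2; apply: contrapT => noz; move: py; apply/negP; rewrite -leNgt.
apply: ereal_sup_ubound; split=> // z Dz zy; rewrite ltNge; apply/negP => pz.
by apply: noz; exists z; split; rewrite -?lte_fin.
Qed.

Lemma pnext_gt (p : R) : D p -> p%:E < pnext p%:E.
Proof.
move=> Dp; rewrite ltNge; apply/negP => np.
have witness y : (p < y)%R -> y%:E <= x2 ->
    exists z, [/\ D z, (z < y)%R & (p <= z - f z)%R].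
  move=> py yx2; have pny : pnext p%:E < y%:E by apply: le_lt_trans np _.
  by have [z [Dz zy pz]] := pnext_lt_witness pny yx2; exists z; rewrite -lee_fin.
have p_lt z : D z -> (p <= z - f z)%R -> (p < z)%R.
  by move=> Dz /le_lt_trans; apply; rewrite ltrBlDr ltrDl f_gt0.
apply: (@ordinal_decreasing_no_descent _ D f [set z | D z /\ (p < z)%R] Hod).
- by move=> z [].
- have [y py yx2] := lt_EFin_exists_real Dp.2.
  by have [z [Dz _ pz]] := witness y py yx2; exists z; split; last exact: p_lt.
move=> z [Dz pz]; have fz := f_gt0 Dz.
have pm : (p < Num.min z (p + f z))%R by rewrite lt_min pz ltrDl fz.
have mx2 : (Num.min z (p + f z))%:E <= x2.
  by apply: le_trans (ltW Dz.2); rewrite lee_fin ge_min lexx.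
have [w [Dw]] := witness _ pm mx2; rewrite lt_min => /andP[wz wpf] pw.
exists w; split=> //; first by split=> //; apply: p_lt.
by rewrite -(ltrD2l p); apply: le_lt_trans wpf; rewrite -lerBrDr.
Qed.

Lemma pt_lt_pnext a : pt a < x2 -> pt a < pnext (pt a).
Proof.
move=> ax2; have /fineK af := pt_fin_num (lt_le_trans ax2 (leey _)).
by rewrite -af; apply: pnext_gt; split; rewrite -?lee_fin -?lte_fin af ?pt_ge_x1.
Qed.

Lemma pnext_pt_oadd_ofin a n : pnext (pt (oadd a (ofin n))) <= pt (oadd a oomega).
Proof. by case: a => A g; apply: (pnext_pt_le_olim _ (inr n)). Qed.

Lemma pnext_pt_oadd_osucc a b : pnext (pt (oadd a b)) <= pt (oadd a (osucc b)).
Proof. by case: a => A g; apply: (pnext_pt_le_olim _ (inr tt)). Qed.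

Lemma pnext_ge_min_add (l r c x : R) : D x -> (l <= r)%R ->
    (forall z, D z -> (l <= z)%R -> (z < x)%R -> (c <= f z)%R) ->
  (Num.min (r + c) x)%:E <= pnext r%:E.
Proof.
move=> Dx lr cf; apply: ereal_sup_ubound; split.
  by apply: le_trans (ltW Dx.2); rewrite lee_fin ge_min lexx orbT.
move=> z Dz; rewrite !lte_fin lt_min => /andP[zrc zx].
have [zl|lz] := ltP z l.
  by apply: lt_le_trans lr; apply: lt_trans zl; rewrite ltrBlDr ltrDl f_gt0.
by rewrite ltrBlDr; apply: lt_le_trans zrc _; rewrite lerD2l cf.
Qed.

Lemma ole_height_at b x :
  D x -> pt (omul oomega b) <= x%:E -> ole b (height_at D f x).
Proof.
elim: b x => B g IH x Dx bx; apply/ole_olim => j; set lam := omul oomega (g j).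
have lam_x : pt (oadd lam oomega) <= x%:E.
  apply: le_trans bx; apply: pt_mono.
  exact: (ole_osup (fun j => oadd (omul oomega (g j)) oomega)).
suff [y [Dy lam_y yx fyx]] :
    exists y, [/\ D y, pt lam <= y%:E, (y < x)%R & (f y < f x)%R].
  exact: ole_olt_trans (IH j y Dy lam_y) (height_at_lt_bad Hod Dx Dy yx fyx).
apply: contrapT => noy.
(* r n is p_(lam + n): it stays below x yet grows by min (f x, x - r n) at each step. *)
pose r n := fine (pt (oadd lam (ofin n))).
have next_x n : pnext (pt (oadd lam (ofin n))) <= x%:E.
  exact: le_trans (pnext_pt_oadd_ofin lam n) lam_x.
have lt_x n : pt (oadd lam (ofin n)) < x%:E.
  apply: lt_le_trans (next_x n); apply: pt_lt_pnext.
  exact: le_lt_trans (pnext_ge (pt_le_x2 _)) (le_lt_trans (next_x n) Dx.2).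
have rE n : (r n)%:E = pt (oadd lam (ofin n)).
  exact: fineK (pt_fin_num (lt_trans (lt_x n) (ltry x))).
have lam_fin : pt lam \is a fin_num.
  apply: pt_fin_num; apply: le_lt_trans (pt_mono (ole_oadd lam (ofin 0))) _.
  exact: lt_trans (lt_x 0%N) (ltry x).
apply: (@no_bounded_linear_growth _ r (f x) x (f_gt0 Dx)) => [n|n].
  by rewrite -lte_fin rE.
rewrite -lee_fin (rE n.+1); apply: le_trans (pnext_pt_oadd_osucc lam (ofin n)).
rewrite -rE; apply: (pnext_ge_min_add (l := fine (pt lam))) => //.
  by rewrite -lee_fin rE fineK //; apply/pt_mono/ole_oadd.
move=> z Dz lz zx; rewrite leNgt; apply/negP => fzx; apply: noy.
by exists z; split=> //; rewrite -(fineK lam_fin) lee_fin.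
Qed.

Lemma Ival_sub_dom a : Ival x1 x2 f a `<=` D.
Proof.
move=> z [az za]; split; first by rewrite -lee_fin; apply: le_trans (pt_ge_x1 a) az.
exact: lt_le_trans za (pt_le_x2 _).
Qed.

Lemma Ival_disjoint a b : olt a b -> Ival x1 x2 f a `&` Ival x1 x2 f b = set0.
Proof.
move=> ab; apply/seteqP; split=> [z [[_ za] [bz _]]|z []].
by have := lt_le_trans za (le_trans (pt_mono (osucc_le ab)) bz); rewrite ltxx.
Qed.

Lemma Ival_cover x : D x -> exists a, Ival x1 x2 f a x.
Proof.
move=> Dx.
(* Indexing by reals rather than by ordinals keeps [olim sel] within [Ord]. *)
pose T := {r : R | exists a, pt a = r%:E /\ (r <= x)%R}.
pose sel (t : T) : Ord := sval (cid (svalP t)).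
have selE t : pt (sel t) = (sval t)%:E /\ (sval t <= x)%R := svalP (cid (svalP t)).
have x_lt : x%:E < pt (olim sel).
  rewrite ltNge; apply/negP => bx.
  have [r rE] : exists r, pt (olim sel) = r%:E.
    exists (fine (pt (olim sel))); rewrite fineK //.
    exact/pt_fin_num/(le_lt_trans bx (ltry x)).
  have rx : (r <= x)%R by rewrite -lee_fin -rE.
  pose t : T := exist _ r (ex_intro _ (olim sel) (conj rE rx)).
  have := pnext_pt_le_olim sel t; rewrite (selE t).1 -[sval t]/r -rE leNgt pt_lt_pnext //.
  exact: le_lt_trans bx Dx.2.
move: x_lt; rewrite /= lt_max => /orP[x1x|].
  by move: Dx.1; rewrite leNgt -lte_fin x1x.
case/ereal_sup_gt => _ [t _ <-] xt; exists (sel t); split.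
  by rewrite (selE t).1 lee_fin; exact: (selE t).2.
exact: lt_le_trans xt (pnext_pt_le_osucc _).
Qed.

Lemma Ival_nonempty_olt a :
  Ival x1 x2 f a !=set0 -> olt a (omul oomega (osucc (o_tree D f))).
Proof.
move=> [z [az za]]; have [le|//] := ole_or_gt (omul oomega (osucc (o_tree D f))) a.
have Dz := Ival_sub_dom (conj az za).
have /ole_olim /(_ tt) o_lt := ole_height_at Dz (le_trans (pt_mono le) az).
by have := olt_irr (ole_olt_trans (oltW o_lt) (height_at_lt_o_tree Hod Dz)).
Qed.

Lemma Ival_before_olt a b : Ival x1 x2 f a !=set0 -> Ival x1 x2 f b !=set0 ->
  set_before (Ival x1 x2 f a) (Ival x1 x2 f b) -> olt a b.
Proof.
move=> [x Iax] [y Iby] ab; have [ba|//] := ole_or_gt b a.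
have xy := ab x y Iax Iby.
have Iay : Ival x1 x2 f a y.
  split; first by apply: le_trans Iax.1 _; rewrite lee_fin ltW.
  exact: lt_le_trans Iby.2 (pt_mono (osucc_mono ba)).
by have := ab y y Iay Iby; rewrite ltxx.
Qed.

End Points.

Lemma otype_le_indexed (R : realType) (F : Ord -> set R) (d : Ord) :
    (forall a, F a !=set0 -> olt a d) ->
    (forall a b, F a !=set0 -> F b !=set0 -> set_before (F a) (F b) -> olt a b) ->
  otype_le [set I | exists a, I = F a /\ I !=set0] d.
Proof.
move=> Fd Fmono; pose idx I := epsilon (inhabits ozero) (fun a => I = F a).
have idxE I : (exists a, I = F a /\ I !=set0) -> I = F (idx I).
  by move=> [a [IF _]]; apply: (epsilon_spec (inhabits ozero) (fun a => I = F a)); exists a.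
exists idx; split=> [I SI|I J SI SJ IJ].
  by have [_ [_ I0]] := SI; apply: Fd; rewrite -idxE.
have [_ [_ I0]] := SI; have [_ [_ J0]] := SJ.
by apply: Fmono; rewrite -?idxE.
Qed.

Theorem lemma6 (R : realType) (x1 : R) (x2 : \bar R) (f : R -> R) :
  (x1%:E < x2)%E ->
  ordinal_decreasing (domD x1 x2) f ->
  (forall x, domD x1 x2 x -> 0 < f x) ->
  (* the intervals I_alpha partition D *)
  ((forall a : Ord, Ival x1 x2 f a `<=` domD x1 x2) /\
   (forall x, domD x1 x2 x -> exists a : Ord, Ival x1 x2 f a x) /\
   (forall a b : Ord, olt a b -> Ival x1 x2 f a `&` Ival x1 x2 f b = set0)) /\
  (* the ordinal number of nonempty intervals is <= omega * (o(f|_D) + 1) *)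
  otype_le [set I : set R | exists a : Ord, I = Ival x1 x2 f a /\ I !=set0]
    (omul oomega (osucc (o_tree (domD x1 x2) f))).
Proof.
move=> x12 Hod f_gt0; split.
  split; first exact: Ival_sub_dom.
  by split; [exact: Ival_cover | exact: Ival_disjoint].
by apply: otype_le_indexed; [exact: Ival_nonempty_olt | exact: Ival_before_olt].
Qed.
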